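(* Let $k\ge 2$ and consider the Maker–Breaker $k$-in-a-row game on the infinite grid $\mathbb Z^2$: the vertex set is $\mathbb Z^2$ and the edges are all sets of $k$ consecutive points on a horizontal, vertical, or diagonal (slope $1$ or $-1$) line, i.e. all sets $\{p+tv: 0\le t\le k-1\}$ with $p\in\mathbb Z^2$ and $v\in\{(1,0),(0,1),(1,1),(1,-1)\}$. If Breaker has a winning pairing strategy for this game, then $k\ge 9$.
   Context: A winning pairing strategy for Breaker on a hypergraph $(V,E)$ is a family of pairwise disjoint 2-element subsets of $V$ such that every edge of $E$ contains at least one of these pairs. *)

From Stdlib Require Import ZArith.
Open Scope Z_scope.

Definition point := (Z * Z)%type.

Definition direction (v : point) : Prop :=
  v = (1, 0) \/ v = (0, 1) \/ v = (1, 1) \/ v = (1, -1).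

Definition line_edge (k : nat) (p v : point) (x : point) : Prop :=
  exists t : Z, 0 <= t <= Z.of_nat k - 1 /\
    x = (fst p + t * fst v, snd p + t * snd v).

Definition kinrow_edge (k : nat) (E : point -> Prop) : Prop :=
  exists p v, direction v /\ forall x, E x <-> line_edge k p v x.

Definition two_set (S : point -> Prop) : Prop :=
  exists a b : point, a <> b /\ forall x, S x <-> (x = a \/ x = b).

(* Sets are predicates; "pairwise disjoint" is stated as: two
   members of F that meet are (extensionally) the same set. *)
Definition pairing_strategy (isEdge : (point -> Prop) -> Prop)
    (F : (point -> Prop) -> Prop) : Prop :=
  (forall S, F S -> two_set S) /\
  (forall S T, F S -> F T -> (exists x, S x /\ T x) -> forall x, S x <-> T x) /\
  (forall E, isEdge E -> exists S, F S /\ forall x, S x -> E x).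

Definition breaker_has_pairing_strategy (k : nat) : Prop :=
  exists F, pairing_strategy (kinrow_edge k) F.

From Stdlib Require Import ZArith Lia ClassicalEpsilon.
From HB Require Import structures.
From mathcomp Require all_boot zify.

(* Take the 4 M^2 lines of the game with first point in [k-1, M+k-1)^2 and
   direction among the four; they all lie in the box [0, M + 2(k-1))^2.  Each
   of them contains a pair of the strategy, and the pairs are disjoint, so
   every box point lies in at most one pair.  Two points determine the
   direction of a line through both, so a pair {p + s v, p + t v} with s < t
   lies only on lines of direction v, and such a line is determined by the
   position s < k - 1 of the first point of the pair on it.  Hence each box
   point is counted by at most k - 1 of the lines, and double counting gives
   8 M^2 <= (k - 1) (M + 2(k - 1))^2, which fails for k <= 8 and M = 203. *)

Module KInARowPairing.
Import all_boot zify.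
Set Implicit Arguments.
Unset Strict Implicit.
Local Open Scope nat_scope.

HB.instance Definition _ := hasDecEq.Build Z Z.eqb_spec.

Definition line_point (p v : point) (t : Z) : point :=
  (fst p + t * fst v, snd p + t * snd v)%Z.

Ltac case_direction h :=
  case: h => [[-> ->] | [[-> ->] | [[-> ->] | [-> ->]]]].

Lemma line_point_inj (p v : point) (t1 t2 : Z) :
  direction v -> t1 <> t2 -> line_point p v t1 <> line_point p v t2.
Proof.
case: v => v1 v2 hv; case_direction hv; rewrite /line_point /= => ht [] *; lia.
Qed.

Lemma line_points_agree (p p' v w : point) (t1 t2 s2 : Z) :
  direction v -> direction w -> t1 <> t2 ->
  line_point p v t1 = line_point p' w t1 -> line_point p v t2 = line_point p' w s2 ->
  p = p' /\ v = w.
Proof.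
case: p p' v w => [a b] [a' b'] [v1 v2] [w1 w2] hv hw.
case_direction hv; case_direction hw; rewrite /line_point /= => ht [e1 e2] [e3 e4];
  first [by split; [congr pair; lia |] | exfalso; lia].
Qed.

Lemma line_points_not_reversed (p p' v w : point) (t1 t2 s1 s2 : Z) :
  direction v -> direction w -> (t1 < t2)%Z -> (s1 < s2)%Z ->
  line_point p v t1 = line_point p' w s2 -> line_point p v t2 <> line_point p' w s1.
Proof.
case: p p' v w => [a b] [a' b'] [v1 v2] [w1 w2] hv hw.
case_direction hv; case_direction hw; rewrite /line_point /= => ht hs [e1 e2] [e3 e4]; lia.
Qed.

Lemma two_point_sets_eq (T : Type) (a b c d : T) :
  a <> b -> (forall x, x = a \/ x = b <-> x = c \/ x = d) ->
  (a = c /\ b = d) \/ (a = d /\ b = c).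
Proof.
move=> ab eqS.
have [ac | ad] : a = c \/ a = d by apply/eqS; left.
have [bc | bd] : b = c \/ b = d by apply/eqS; right.
- by case: ab; rewrite ac bc.
- by left.
have [bc | bd] : b = c \/ b = d by apply/eqS; right.
- by right.
- by case: ab; rewrite ad bd.
Qed.

Lemma pairing_blocks_line k F (p v : point) :
  pairing_strategy (kinrow_edge k) F -> direction v ->
  exists t : Z * Z, [/\ (0 <= t.1 < t.2)%Z, (t.2 < Z.of_nat k)%Z &
    exists2 S, F S & forall x, S x <-> x = line_point p v t.1 \/ x = line_point p v t.2].
Proof.
move=> [two_sets [_ blocks]] hv.
have edge_pv : kinrow_edge k (line_edge k p v) by exists p, v; split => // x.
have [S [FS Sline]] := blocks _ edge_pv.
have [a [b [ab Sab]]] := two_sets S FS.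
have [ta [hta ea]] := Sline a (proj2 (Sab a) (or_introl erefl)).
have [tb [htb eb]] := Sline b (proj2 (Sab b) (or_intror erefl)).
subst a b.
have [lt_ab | [eq_ab | lt_ba]] := Z.lt_total ta tb.
- exists (ta, tb); split => /=; [lia | lia | exists S => // x; exact: Sab].
- by case: ab; rewrite eq_ab.
- exists (tb, ta); split => /=; [lia | lia | exists S => // x].
  by rewrite Sab; split; case; auto.
Qed.

Lemma double_counting (I J : finType) (r : I -> J -> bool) (a b : nat) :
  (forall i, a <= #|[pred j | r i j]|) -> (forall j, #|[pred i | r i j]| <= b) ->
  #|I| * a <= #|J| * b.
Proof.
have card_row (T : finType) (P : pred T) : #|P| = \sum_(x : T) P x.
  by rewrite -sum1_card big_mkcond; apply: eq_bigr => x _; rewrite unfold_in; case: (P x).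
move=> ge_a le_b; rewrite -!sum_nat_const.
apply: (@leq_trans (\sum_(i : I) \sum_(j : J) r i j)).
  by apply: leq_sum => i _; apply: leq_trans (ge_a i) _; rewrite card_row.
by rewrite exchange_big; apply: leq_sum => j _; apply: leq_trans (le_b j); rewrite card_row.
Qed.

Definition dirv (d : 'I_4) : point :=
  match val d with 0 => (1, 0)%Z | 1 => (0, 1)%Z | 2 => (1, 1)%Z | _ => (1, -1)%Z end.

Lemma dirv_direction d : direction (dirv d).
Proof. by case: d => [[|[|[|[|n]]]] ?]; rewrite /direction /dirv /=; auto. Qed.

Lemma dirv_inj : injective dirv.
Proof. by do 2![case=> [[|[|[|[|?]]]] ?]] => //= _; apply: val_inj. Qed.

Section BoxCount.
Variables (k : nat) (F : (point -> Prop) -> Prop).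
Hypothesis hF : pairing_strategy (kinrow_edge k) F.
Variable M : nat.

Local Notation side := (M + (k.-1).*2).
Local Notation edge := ('I_M * 'I_M * 'I_4)%type.
Local Notation cell := ('I_side * 'I_side)%type.

Definition anchor (e : edge) : point := (Z.of_nat (e.1.1 + k.-1), Z.of_nat (e.1.2 + k.-1)).

Lemma edge_inj e e' : anchor e = anchor e' -> dirv e.2 = dirv e'.2 -> e = e'.
Proof.
case: e e' => [[a b] d] [[a' b'] d'] [ea eb] /dirv_inj /= ->.
by congr (_, _, _); apply: ord_inj; lia.
Qed.

Definition block_point (e : edge) (t : Z) : point := line_point (anchor e) (dirv e.2) t.

Definition blocker (e : edge) : Z * Z :=
  proj1_sig (constructive_indefinite_description _
    (pairing_blocks_line (anchor e) hF (dirv_direction e.2))).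

Lemma blockerP e :
  [/\ (0 <= (blocker e).1 < (blocker e).2)%Z, ((blocker e).2 < Z.of_nat k)%Z &
    exists2 S, F S &
      forall x, S x <-> x = block_point e (blocker e).1 \/ x = block_point e (blocker e).2].
Proof. by rewrite /blocker; case: constructive_indefinite_description. Qed.

Definition cell_point (x : cell) : point := (Z.of_nat x.1, Z.of_nat x.2).

Definition blocks (e : edge) (x : cell) : bool :=
  (cell_point x == block_point e (blocker e).1) ||
  (cell_point x == block_point e (blocker e).2).

Lemma point_in_box (c : point) :
  (0 <= c.1 < Z.of_nat side)%Z -> (0 <= c.2 < Z.of_nat side)%Z ->
  exists x : cell, cell_point x = c.
Proof.
case: c => c1 c2 /= h1 h2.
have lt1 : Z.to_nat c1 < side by lia.
have lt2 : Z.to_nat c2 < side by lia.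
by exists (Ordinal lt1, Ordinal lt2); rewrite /cell_point /=; congr pair; lia.
Qed.

Lemma block_point_in_box e t :
  (0 <= t < Z.of_nat k)%Z -> exists x : cell, cell_point x = block_point e t.
Proof.
case: e => [[a b] d] ht; have ha := ltn_ord a; have hb := ltn_ord b.
apply: point_in_box; rewrite /block_point /line_point /anchor /=.
all: have [-> | [-> | [-> | ->]]] := dirv_direction d; rewrite /=; lia.
Qed.

Lemma blocks_two_cells e : 2 <= #|[pred x | blocks e x]|.
Proof.
have [h12 h2 _] := blockerP e.
have [x1 ex1] := @block_point_in_box e (blocker e).1 ltac:(lia).
have [x2 ex2] := @block_point_in_box e (blocker e).2 ltac:(lia).
have x12 : x1 != x2.
  apply/eqP => /(congr1 cell_point); rewrite ex1 ex2.
  by apply: line_point_inj; [exact: dirv_direction | lia].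
have sub : [set x1; x2] \subset [pred x | blocks e x].
  by apply/subsetP => x; rewrite !inE /blocks => /orP[] /eqP ->; rewrite ?ex1 ?ex2 eqxx ?orbT.
by apply: leq_trans (subset_leq_card sub); rewrite cards2 x12.
Qed.

Lemma blocker_first_lt e : Z.to_nat (blocker e).1 < k.-1.
Proof. by have [? ? _] := blockerP e; lia. Qed.

Definition first_index (e : edge) : 'I_k.-1 := Ordinal (blocker_first_lt e).

Lemma first_index_inj x : {in [pred e | blocks e x] &, injective first_index}.
Proof.
have blocking_pair e : blocks e x -> exists2 S, F S & S (cell_point x) /\
    forall y, S y <-> y = block_point e (blocker e).1 \/ y = block_point e (blocker e).2.
  have [_ _ [S FS Se]] := blockerP e.
  by move=> /orP xe; exists S => //; split => //; apply/Se; case: xe => /eqP ->; auto.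
move=> e e'; rewrite !inE => /blocking_pair[S FS [xS Se]] /blocking_pair[S' FS' [xS' Se']].
move=> /(congr1 val) /= eq_first.
have [h12 _ _] := blockerP e; have [h12' _ _] := blockerP e'.
have SS' := hF.2.1 S S' FS FS' (ex_intro _ _ (conj xS xS')).
have [[e1 e2] | [e1 e2]] := two_point_sets_eq
  (line_point_inj (dirv_direction e.2) (Z.lt_neq _ _ (proj2 h12)))
  (fun y => iff_trans (iff_sym (Se y)) (iff_trans (SS' y) (Se' y))).
- have eq_first' : (blocker e).1 = (blocker e').1 by lia.
  rewrite /block_point -eq_first' in e1 e2.
  have [ea ed] := line_points_agree (dirv_direction _) (dirv_direction _)
    (Z.lt_neq _ _ (proj2 h12)) e1 e2.
  exact: edge_inj.
- by case: (line_points_not_reversed (dirv_direction _) (dirv_direction _)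
    (proj2 h12) (proj2 h12') e1 e2).
Qed.

Lemma blocking_edges_le x : #|[pred e | blocks e x]| <= k.-1.
Proof.
rewrite -(card_in_imset (@first_index_inj x)).
by apply: leq_trans (max_card _) _; rewrite card_ord.
Qed.

Lemma box_count : 8 * M ^ 2 <= k.-1 * side ^ 2.
Proof.
have := double_counting blocks_two_cells blocking_edges_le.
by rewrite !card_prod !card_ord; nia.
Qed.

End BoxCount.

Lemma pairing_strategy_ge9 k F :
  pairing_strategy (kinrow_edge k) F -> (9 <= k)%coq_nat.
Proof.
move=> hF; apply/leP; rewrite leqNgt; apply/negP => lt_k9.
have := box_count hF 203.
have : k.-1 * (203 + (k.-1).*2) ^ 2 <= 7 * 217 ^ 2.
  by apply: leq_mul; [ | rewrite leq_exp2r //]; lia.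
lia.
Qed.

End KInARowPairing.

Theorem mainTheorem5 (k : nat) (hk : (2 <= k)%nat) :
  breaker_has_pairing_strategy k -> (9 <= k)%nat.
Proof. intros [F hF]; exact (KInARowPairing.pairing_strategy_ge9 hF). Qed.
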